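(* Let $L$ be a left inverse semigroup and $R$ a right inverse semigroup with a common quasi-ideal inverse transversal $S^0$. Let $L|\times|R=\{(x,a)\in L\times R: x^0=a^0\}$ with multiplication $(x,a)(y,b)=(xy^{00},\,a^{00}b)$. Then $L|\times|R$ is an orthodox semigroup with a quasi-ideal inverse transversal isomorphic to $S^0$. Moreover every orthodox semigroup with a quasi-ideal inverse transversal can be constructed (up to isomorphism) in this way.
   Context: A left (right) inverse semigroup is a regular semigroup in which each $\mathcal{R}$-class (each $\mathcal{L}$-class) contains a unique idempotent. An orthodox semigroup is a regular semigroup whose idempotents form a subsemigroup. An inverse subsemigroup $T^0$ of a regular semigroup $T$ is an inverse transversal if each $x\in T$ has exactly one inverse $x^0$ in $T^0$, and $x^{00}=(x^0)^0$; it is a quasi-ideal if $T^0TT^0\subseteq T^0$. ''Common quasi-ideal inverse transversal'' means $S^0$ is a subsemigroup of both $L$ and $R$ and a quasi-ideal inverse transversal of each; $x^0$ is computed in $L$ for $x\in L$ and in $R$ for $a\in R$. *)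

Section Semigroups.
Context {T : Type} (m : T -> T -> T).

Definition associative_op : Prop := forall x y z, m x (m y z) = m (m x y) z.

Definition idempotent (e : T) : Prop := m e e = e.

Definition is_inverse (x y : T) : Prop := m (m x y) x = x /\ m (m y x) y = y.

Definition regular : Prop := forall x, exists y, m (m x y) x = x.

(* Green's relations, using S^1 *)
Definition Rrel (x y : T) : Prop :=
  (x = y \/ exists s, x = m y s) /\ (y = x \/ exists s, y = m x s).
Definition Lrel (x y : T) : Prop :=
  (x = y \/ exists s, x = m s y) /\ (y = x \/ exists s, y = m s x).

Definition left_inverse_semigroup : Prop :=
  associative_op /\ regular /\
  forall x, exists! e, idempotent e /\ Rrel x e.

Definition right_inverse_semigroup : Prop :=
  associative_op /\ regular /\
  forall x, exists! e, idempotent e /\ Lrel x e.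

Definition orthodox_semigroup : Prop :=
  associative_op /\ regular /\
  forall e f, idempotent e -> idempotent f -> idempotent (m e f).

End Semigroups.

(* A quasi-ideal inverse transversal of (T, m), presented as an isomorphic copy:
   (S0, m0) is embedded into (T, m) by the injective homomorphism j, whose image
   is the transversal S^0; o x is the (unique) inverse x^0 of x lying in S^0,
   i.e. x^0 = j (o x). *)
Definition qi_inverse_transversal {T S0 : Type} (m : T -> T -> T)
    (m0 : S0 -> S0 -> S0) (j : S0 -> T) (o : T -> S0) : Prop :=
  (forall s t, j (m0 s t) = m (j s) (j t)) /\
  (forall s t, j s = j t -> s = t) /\
  (forall x, is_inverse m x (j (o x))) /\
  (forall x s, is_inverse m x (j s) -> s = o x) /\
  (forall s t x, exists u, m (m (j s) x) (j t) = j u).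

Definition spined_mul {L R S0 : Type} (mL : L -> L -> L) (mR : R -> R -> R)
    (iL : S0 -> L) (oL : L -> S0) (iR : S0 -> R) (oR : R -> S0)
    (u v : L * R) : L * R :=
  (mL (fst u) (iL (oL (iL (oL (fst v))))),
   mR (iR (oR (iR (oR (snd u))))) (snd v)).

Definition spined_carrier {L R S0 : Type} (oL : L -> S0) (oR : R -> S0)
    (u : L * R) : Prop := oL (fst u) = oR (snd u).

Definition sub_mul {T : Type} (m : T -> T -> T) (P : T -> Prop)
    (H : forall u v, P u -> P v -> P (m u v)) (u v : sig P) : sig P :=
  exist P (m (proj1_sig u) (proj1_sig v))
        (H _ _ (proj2_sig u) (proj2_sig v)).

Definition is_isomorphism {A B : Type} (mA : A -> A -> A) (mB : B -> B -> B)
    (f : A -> B) : Prop :=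
  (forall x y, f (mA x y) = mB (f x) (f y)) /\
  (forall x y, f x = f y -> x = y) /\
  (forall z, exists x, f x = z).

(* Everything rests on the transversal S^0 being an inverse semigroup, so that its
   idempotents commute, and on the rule (x y)^0 = y^0 x^0: in a left inverse semigroup
   it holds for y in S^0, in an orthodox semigroup for all x, y.  In the spined product
   the rule shows that the condition x^0 = a^0 is preserved, that the product is
   associative and orthodox, and that the diagonal {(s, s) | s in S^0} is a quasi-ideal
   inverse transversal.  Conversely, an orthodox S splits every x as
   (x x^0 x^00) x^0 (x^00 x^0 x): the fixed points of x |-> x x^0 x^00 form a left ideal L
   which is a left inverse semigroup, dually for R, and x |-> (x x^0 x^00, x^00 x^0 x) is an
   isomorphism onto L |x| R.  Right-handed statements are the left-handed ones for the
   converse multiplication. *)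

From Stdlib Require Import ProofIrrelevance Setoid.

Ltac right_assoc jm mA := repeat rewrite jm; repeat rewrite <- mA.

Definition converse_op {T : Type} (m : T -> T -> T) : T -> T -> T := fun x y => m y x.

Lemma val_inj {A : Type} {P : A -> Prop} (u v : sig P) :
  proj1_sig u = proj1_sig v -> u = v.
Proof. destruct u, v; simpl; intros ->; f_equal; apply proof_irrelevance. Qed.

(** * Converse semigroups *)

Section Converse.
Context {T S0 : Type} {m : T -> T -> T} {m0 : S0 -> S0 -> S0} {j : S0 -> T} {o : T -> S0}.
Hypothesis mA : associative_op m.

Lemma assoc_converse : associative_op (converse_op m).
Proof. intros x y z; unfold converse_op; symmetry; apply mA. Qed.

Lemma regular_converse : regular m -> regular (converse_op m).
Proof.
  intros Hreg x; destruct (Hreg x) as [y Hy]; exists y.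
  unfold converse_op; rewrite mA; exact Hy.
Qed.

Lemma is_inverse_converse x y : is_inverse (converse_op m) x y <-> is_inverse m x y.
Proof. unfold is_inverse, converse_op; rewrite !mA; tauto. Qed.

Lemma qi_converse : qi_inverse_transversal m m0 j o ->
  qi_inverse_transversal (converse_op m) (converse_op m0) j o.
Proof.
  intros (Hj & Hinj & Hinv & Huniq & Hqi).
  split; [|split; [|split; [|split]]].
  - intros s t; apply Hj.
  - exact Hinj.
  - intros x; apply is_inverse_converse, Hinv.
  - intros x s H; apply Huniq, is_inverse_converse, H.
  - intros s t x; destruct (Hqi t s x) as [u Hu]; exists u.
    unfold converse_op; rewrite mA; exact Hu.
Qed.
End Converse.

Lemma left_converse_of_right {T : Type} {m : T -> T -> T} :
  right_inverse_semigroup m -> left_inverse_semigroup (converse_op m).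
Proof.
  intros (mA & Hreg & Hidem).
  (* [Rrel (converse_op m)] is [Lrel m] up to conversion *)
  exact (conj (assoc_converse mA) (conj (regular_converse mA Hreg) Hidem)).
Qed.

Lemma right_converse_of_left {T : Type} {m : T -> T -> T} :
  left_inverse_semigroup m -> right_inverse_semigroup (converse_op m).
Proof.
  intros (mA & Hreg & Hidem).
  exact (conj (assoc_converse mA) (conj (regular_converse mA Hreg) Hidem)).
Qed.

Lemma orthodox_converse {T : Type} {m : T -> T -> T} :
  orthodox_semigroup m -> orthodox_semigroup (converse_op m).
Proof.
  intros (mA & Hreg & Hidem); split; [exact (assoc_converse mA) | split].
  - exact (regular_converse mA Hreg).
  - intros e f He Hf; exact (Hidem f e Hf He).
Qed.

(** * Inverse transversals *)

Section Transversal.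
Context {T S0 : Type} {m : T -> T -> T} {m0 : S0 -> S0 -> S0} {j : S0 -> T} {o : T -> S0}.
Hypotheses (mA : associative_op m) (Hq : qi_inverse_transversal m m0 j o).

Local Notation inv s := (o (j s)).

Lemma j_mul s t : j (m0 s t) = m (j s) (j t).
Proof. destruct Hq as (H & _); apply H. Qed.

Lemma j_inj s t : j s = j t -> s = t.
Proof. destruct Hq as (_ & H & _); apply H. Qed.

Lemma qi_regular : regular m.
Proof. destruct Hq as (_ & _ & H & _); intros x; exists (j (o x)); apply (H x). Qed.

Lemma x_o_x x : m x (m (j (o x)) x) = x.
Proof. destruct Hq as (_ & _ & H & _); rewrite mA; apply (H x). Qed.

Lemma o_x_o x : m (j (o x)) (m x (j (o x))) = j (o x).
Proof. destruct Hq as (_ & _ & H & _); rewrite mA; apply (H x). Qed.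

Lemma o_unique x s : m x (m (j s) x) = x -> m (j s) (m x (j s)) = j s -> s = o x.
Proof.
  destruct Hq as (_ & _ & _ & H & _); intros H1 H2.
  apply H; split; rewrite <- mA; assumption.
Qed.

Lemma quasi_ideal s t x : exists u, m (j s) (m x (j t)) = j u.
Proof. destruct Hq as (_ & _ & _ & _ & H); rewrite mA; apply H. Qed.

Lemma Rrel_idem_mul e x : idempotent m e -> Rrel m x e -> m e x = x.
Proof.
  intros He [[-> | [s ->]] _]; [exact He |].
  rewrite mA, He; reflexivity.
Qed.

Lemma Rrel_x_o_mul e x : Rrel m x e -> m (m x (j (o x))) e = e.
Proof.
  intros [_ [-> | [s ->]]].
  - rewrite <- mA; apply x_o_x.
  - rewrite mA, <- (mA x), x_o_x; reflexivity.
Qed.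

Lemma m0_assoc : associative_op m0.
Proof. intros s t u; apply j_inj; rewrite !j_mul; apply mA. Qed.

Ltac m0_norm := repeat rewrite <- m0_assoc.

Lemma idem_o_x x : idempotent m (m (j (o x)) x).
Proof. unfold idempotent; rewrite <- mA, x_o_x; reflexivity. Qed.

Lemma idem_x_o x : idempotent m (m x (j (o x))).
Proof. unfold idempotent; rewrite <- mA, o_x_o; reflexivity. Qed.

Lemma s_inv_s s : m0 s (m0 (inv s) s) = s.
Proof. apply j_inj; rewrite !j_mul; apply x_o_x. Qed.

Lemma inv_s_inv s : m0 (inv s) (m0 s (inv s)) = inv s.
Proof. apply j_inj; rewrite !j_mul; apply o_x_o. Qed.

Lemma inv_unique s t : m0 s (m0 t s) = s -> m0 t (m0 s t) = t -> t = inv s.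
Proof. intros H1 H2; apply o_unique; rewrite <- !j_mul; congruence. Qed.

Lemma inv_inv s : inv (inv s) = s.
Proof. symmetry; apply inv_unique; [apply inv_s_inv | apply s_inv_s]. Qed.

Lemma idem_l e s : idempotent m0 e -> m0 e (m0 e s) = m0 e s.
Proof. intros He; rewrite m0_assoc, He; reflexivity. Qed.

Lemma inv_idem e : idempotent m0 e -> inv e = e.
Proof. intros He; symmetry; apply inv_unique; rewrite (idem_l e e He); exact He. Qed.

Lemma idem_mul e f : idempotent m0 e -> idempotent m0 f -> idempotent m0 (m0 e f).
Proof.
  intros He Hf.
  (* [f (ef)^-1 e] is an inverse of [ef], hence equal to [(ef)^-1], which is thus idempotent *)
  assert (Hw : m0 f (m0 (inv (m0 e f)) e) = inv (m0 e f)).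
  { apply inv_unique.
    - transitivity (m0 (m0 e f) (m0 (inv (m0 e f)) (m0 e f))); [|apply s_inv_s].
      m0_norm; rewrite (idem_l f _ Hf), (idem_l e _ He); reflexivity.
    - transitivity (m0 f (m0 (m0 (inv (m0 e f)) (m0 (m0 e f) (inv (m0 e f)))) e)).
      + m0_norm; rewrite (idem_l e _ He), (idem_l f _ Hf); reflexivity.
      + rewrite inv_s_inv; reflexivity. }
  assert (Hz : idempotent m0 (inv (m0 e f))).
  { unfold idempotent; rewrite <- Hw at 1 2.
    transitivity (m0 f (m0 (m0 (inv (m0 e f)) (m0 (m0 e f) (inv (m0 e f)))) e)); [m0_norm; reflexivity|].
    rewrite inv_s_inv; exact Hw. }
  rewrite <- (inv_inv (m0 e f)), (inv_idem _ Hz); exact Hz.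
Qed.

Lemma idem_comm e f : idempotent m0 e -> idempotent m0 f -> m0 e f = m0 f e.
Proof.
  intros He Hf.
  assert (Hef := idem_mul e f He Hf); assert (Hfe := idem_mul f e Hf He).
  rewrite <- (inv_idem _ Hef); symmetry; apply inv_unique.
  - transitivity (m0 (m0 e f) (m0 e f)); [|exact Hef].
    m0_norm; rewrite (idem_l f _ Hf), (idem_l e _ He); reflexivity.
  - transitivity (m0 (m0 f e) (m0 f e)); [|exact Hfe].
    m0_norm; rewrite (idem_l e _ He), (idem_l f _ Hf); reflexivity.
Qed.

Lemma idem_s_inv s : idempotent m0 (m0 s (inv s)).
Proof.
  unfold idempotent; transitivity (m0 (m0 s (m0 (inv s) s)) (inv s)); [m0_norm; reflexivity|].
  rewrite s_inv_s; reflexivity.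
Qed.

Lemma idem_inv_s s : idempotent m0 (m0 (inv s) s).
Proof.
  unfold idempotent; transitivity (m0 (m0 (inv s) (m0 s (inv s))) s); [m0_norm; reflexivity|].
  rewrite inv_s_inv; reflexivity.
Qed.

Lemma inv_mul s t : inv (m0 s t) = m0 (inv t) (inv s).
Proof.
  symmetry; apply inv_unique.
  - transitivity (m0 s (m0 (m0 (m0 t (inv t)) (m0 (inv s) s)) t)); [m0_norm; reflexivity|].
    rewrite (idem_comm _ _ (idem_s_inv t) (idem_inv_s s)).
    transitivity (m0 (m0 s (m0 (inv s) s)) (m0 t (m0 (inv t) t))); [m0_norm; reflexivity|].
    rewrite !s_inv_s; reflexivity.
  - transitivity (m0 (inv t) (m0 (m0 (m0 (inv s) s) (m0 t (inv t))) (inv s))); [m0_norm; reflexivity|].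
    rewrite (idem_comm _ _ (idem_inv_s s) (idem_s_inv t)).
    transitivity (m0 (m0 (inv t) (m0 t (inv t))) (m0 (inv s) (m0 s (inv s)))); [m0_norm; reflexivity|].
    rewrite !inv_s_inv; reflexivity.
Qed.

Lemma idem_inv_absorb e t : idempotent m0 e ->
  m0 (m0 (inv t) t) (m0 e (inv t)) = m0 e (inv t).
Proof.
  intros He; rewrite m0_assoc, (idem_comm _ _ (idem_inv_s t) He).
  m0_norm; rewrite inv_s_inv; reflexivity.
Qed.

Ltac norm := right_assoc j_mul mA; reflexivity.

Section LeftInverse.
Hypothesis HL : left_inverse_semigroup m.

Lemma o_x_eq_o_oo x : m (j (o x)) x = j (m0 (o x) (inv (o x))).
Proof.
  destruct HL as (_ & _ & Huniq).
  destruct (Huniq (j (o x))) as [e [_ He]].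
  transitivity e; [symmetry | ]; apply He; split.
  - apply idem_o_x.
  - split; right; [exists (j (o x)); rewrite <- mA, o_x_o | exists x]; reflexivity.
  - unfold idempotent; rewrite <- j_mul, (idem_s_inv (o x)); reflexivity.
  - split; right; [exists (j (o x)); rewrite <- j_mul, <- m0_assoc, s_inv_s
                  | exists (j (inv (o x))); apply j_mul]; reflexivity.
Qed.

Lemma x_o_oo x : m x (j (m0 (o x) (inv (o x)))) = x.
Proof. rewrite <- o_x_eq_o_oo; apply x_o_x. Qed.

Lemma o_mul_j x t : o (m x (j t)) = m0 (inv t) (o x).
Proof.
  symmetry; apply o_unique.
  - transitivity (m x (m (j (m0 t (inv t))) (m (m (j (o x)) x) (j t)))); [norm|].
    rewrite o_x_eq_o_oo.
    transitivity (m x (j (m0 (m0 (m0 t (inv t)) (m0 (o x) (inv (o x)))) t))); [norm|].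
    rewrite (idem_comm _ _ (idem_s_inv t) (idem_s_inv (o x))).
    transitivity (m (m x (j (m0 (o x) (inv (o x))))) (j (m0 t (m0 (inv t) t)))); [norm|].
    rewrite x_o_oo, s_inv_s; reflexivity.
  - transitivity (m (j (inv t)) (m (m (j (o x)) x) (m (j t) (j (m0 (inv t) (o x)))))); [norm|].
    rewrite o_x_eq_o_oo.
    transitivity (j (m0 (inv t) (m0 (m0 (m0 (o x) (inv (o x))) (m0 t (inv t))) (o x)))); [norm|].
    rewrite (idem_comm _ _ (idem_s_inv (o x)) (idem_s_inv t)).
    transitivity (j (m0 (m0 (inv t) (m0 t (inv t))) (m0 (o x) (m0 (inv (o x)) (o x))))); [norm|].
    rewrite inv_s_inv, s_inv_s; reflexivity.
Qed.

Lemma idem_o_of_x_oo x : m x (j (inv (o x))) = x -> idempotent m0 (o x).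
Proof. intros Hx; unfold idempotent; rewrite <- Hx at 3; rewrite o_mul_j, inv_inv; reflexivity. Qed.

Lemma left_idem_mul x y : m x (j (inv (o x))) = x -> m y (j (inv (o y))) = y ->
  m (m x (j (inv (o y)))) (j (inv (o (m x (j (inv (o y))))))) = m x (j (inv (o y))).
Proof.
  intros Hx Hy.
  assert (Ix := idem_o_of_x_oo x Hx); assert (Iy := idem_o_of_x_oo y Hy).
  rewrite (inv_idem _ Ix) in Hx.
  rewrite (inv_idem _ Iy), o_mul_j, (inv_idem _ Iy), inv_mul, (inv_idem _ Ix), (inv_idem _ Iy).
  assert (E : m0 (o y) (m0 (o x) (o y)) = m0 (o x) (o y)).
  { rewrite m0_assoc, (idem_comm _ _ Iy Ix), <- m0_assoc, Iy; reflexivity. }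
  rewrite <- mA, <- j_mul, E, j_mul, mA, Hx; reflexivity.
Qed.

Lemma o_unique_left x s :
  m x (m (j s) (j (inv (o x)))) = x -> m0 s (m0 (inv (o x)) s) = s -> s = o x.
Proof.
  intros H1 H2.
  assert (E1 : m0 (o x) (m0 (inv (o x)) (m0 s (inv (o x)))) = m0 (o x) (inv (o x))).
  { apply j_inj.
    transitivity (m (m (j (o x)) x) (m (j s) (j (inv (o x))))); [rewrite o_x_eq_o_oo; norm|].
    rewrite <- mA, H1; apply o_x_eq_o_oo. }
  assert (E2 : m0 (inv (o x)) (m0 s (inv (o x))) = inv (o x)).
  { rewrite <- (inv_s_inv (o x)) at 1; m0_norm; rewrite E1; apply inv_s_inv. }
  rewrite <- (inv_inv (o x)); apply inv_unique; assumption.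
Qed.
End LeftInverse.
End Transversal.

Section RightInverse.
Context {T S0 : Type} {m : T -> T -> T} {m0 : S0 -> S0 -> S0} {j : S0 -> T} {o : T -> S0}.
Hypotheses (HR : right_inverse_semigroup m) (Hq : qi_inverse_transversal m m0 j o).

Let mA' := assoc_converse (proj1 HR).
Let Hq' := qi_converse (proj1 HR) Hq.
Let HL' := left_converse_of_right HR.

Local Notation inv s := (o (j s)).

Lemma o_j_mul a t : o (m (j t) a) = m0 (o a) (inv t).
Proof. exact (o_mul_j mA' Hq' HL' a t). Qed.

Lemma oo_o_x a : m (j (m0 (inv (o a)) (o a))) a = a.
Proof. exact (x_o_oo mA' Hq' HL' a). Qed.

Lemma right_idem_mul a b : m (j (inv (o a))) a = a -> m (j (inv (o b))) b = b ->
  m (j (inv (o (m (j (inv (o a))) b)))) (m (j (inv (o a))) b) = m (j (inv (o a))) b.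
Proof. intros Ha Hb; exact (left_idem_mul mA' Hq' HL' b a Hb Ha). Qed.
End RightInverse.

(** * The spined product *)

Section SpinedProduct.
Context {L R S0 : Type} {mL : L -> L -> L} {mR : R -> R -> R} {m0 : S0 -> S0 -> S0}
  {iL : S0 -> L} {oL : L -> S0} {iR : S0 -> R} {oR : R -> S0}.
Hypotheses (HL : left_inverse_semigroup mL) (HR : right_inverse_semigroup mR)
  (HqL : qi_inverse_transversal mL m0 iL oL) (HqR : qi_inverse_transversal mR m0 iR oR).

Let mAL := proj1 HL.
Let mAR := proj1 HR.

Lemma transversal_inv_agree s : oL (iL s) = oR (iR s).
Proof. apply (inv_unique mAR HqR); [apply (s_inv_s mAL HqL) | apply (inv_s_inv mAL HqL)]. Qed.

Lemma spined_closed u v : spined_carrier oL oR u -> spined_carrier oL oR v ->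
  spined_carrier oL oR (spined_mul mL mR iL oL iR oR u v).
Proof.
  destruct u as [x a], v as [y b]; unfold spined_carrier, spined_mul; simpl; intros Hu Hv.
  rewrite (o_mul_j mAL HqL HL), (o_j_mul HR HqR), (inv_inv mAL HqL), (inv_inv mAR HqR).
  congruence.
Qed.

Local Notation spined := (sig (spined_carrier oL oR)).
Local Notation mul := (sub_mul _ _ spined_closed).

Definition spined_j (s : S0) : spined := exist _ (iL s, iR s) (transversal_inv_agree s).
Definition spined_o (u : spined) : S0 := oL (fst (proj1_sig u)).

Lemma spined_assoc : associative_op mul.
Proof.
  intros [[x a] Hx] [[y b] Hy] [[z c] Hz]; apply val_inj; simpl; unfold spined_mul; simpl.
  f_equal.
  - rewrite (o_mul_j mAL HqL HL), (inv_inv mAL HqL), (inv_mul mAL HqL), (j_mul HqL), mAL.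
    reflexivity.
  - rewrite (o_j_mul HR HqR), (inv_inv mAR HqR), (inv_mul mAR HqR), (j_mul HqR), mAR.
    reflexivity.
Qed.

Lemma spined_idem_mul e f : idempotent mul e -> idempotent mul f -> idempotent mul (mul e f).
Proof.
  destruct e as [[x a] He0], f as [[y b] Hf0]; unfold idempotent; intros He Hf.
  apply (f_equal (@proj1_sig _ _)) in He; apply (f_equal (@proj1_sig _ _)) in Hf.
  simpl in He, Hf; unfold spined_mul in He, Hf; simpl in He, Hf.
  injection He as Hx Ha; injection Hf as Hy Hb.
  apply val_inj; simpl; unfold spined_mul; simpl; f_equal.
  - exact (left_idem_mul mAL HqL HL x y Hx Hy).
  - exact (right_idem_mul HR HqR a b Ha Hb).
Qed.

Lemma spined_qi : qi_inverse_transversal mul m0 spined_j spined_o.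
Proof.
  split; [|split; [|split; [|split]]].
  - intros s t; apply val_inj; simpl; unfold spined_mul; simpl.
    rewrite (inv_inv mAL HqL), (inv_inv mAR HqR), (j_mul HqL), (j_mul HqR); reflexivity.
  - intros s t H; apply (j_inj HqL); exact (f_equal (fun u => fst (proj1_sig u)) H).
  - intros [[x a] Hu]; unfold spined_carrier in Hu; simpl in Hu.
    split; apply val_inj; simpl; unfold spined_mul, spined_o, spined_j; simpl; f_equal.
    + rewrite (inv_inv mAL HqL), <- mAL, <- (j_mul HqL); apply (x_o_oo mAL HqL HL).
    + rewrite Hu, <- (j_mul HqR), (inv_inv mAR HqR); apply (oo_o_x HR HqR).
    + rewrite (inv_inv mAL HqL), <- !(j_mul HqL), <- (m0_assoc mAL HqL), (s_inv_s mAL HqL).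
      reflexivity.
    + rewrite (inv_inv mAR HqR), (o_j_mul HR HqR), Hu, (inv_mul mAR HqR), (inv_inv mAR HqR),
        <- (j_mul HqR), <- (m0_assoc mAR HqR), (s_inv_s mAR HqR).
      reflexivity.
  - intros [[x a] Hu] s [H1 H2].
    apply (f_equal (fun u => fst (proj1_sig u))) in H1, H2; simpl in H1, H2.
    rewrite (inv_inv mAL HqL), <- mAL in H1.
    rewrite (inv_inv mAL HqL), <- !(j_mul HqL) in H2.
    apply (j_inj HqL) in H2; rewrite <- (m0_assoc mAL HqL) in H2.
    exact (o_unique_left mAL HqL HL x s H1 H2).
  - intros s t [[x a] Hu]; unfold spined_carrier in Hu; simpl in Hu.
    exists (m0 s (m0 (oL (iL (oL x))) t)).
    apply val_inj; simpl; unfold spined_mul; simpl; f_equal.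
    + rewrite (inv_inv mAL HqL), !(j_mul HqL), mAL; reflexivity.
    + rewrite (inv_inv mAR HqR), (o_j_mul HR HqR), (inv_mul mAR HqR), (inv_inv mAR HqR), <- Hu,
        transversal_inv_agree, !(j_mul HqR), mAR; reflexivity.
Qed.

Lemma spined_orthodox : orthodox_semigroup mul.
Proof. split; [exact spined_assoc | split; [exact (qi_regular spined_qi) | exact spined_idem_mul]]. Qed.
End SpinedProduct.

(** * Orthodox semigroups with a quasi-ideal inverse transversal *)

Section Subsemigroup.
Context {T : Type} {m : T -> T -> T} {P : T -> Prop} (Hcl : forall x y, P x -> P y -> P (m x y)).

Local Notation mP := (sub_mul m P Hcl).

Lemma sub_assoc : associative_op m -> associative_op mP.
Proof. intros mA [x Hx] [y Hy] [z Hz]; apply val_inj; apply mA. Qed.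

Lemma sub_idempotent u : idempotent mP u -> idempotent m (proj1_sig u).
Proof. intros H; exact (f_equal (@proj1_sig _ _) H). Qed.

Lemma sub_Rrel u v : Rrel mP u v -> Rrel m (proj1_sig u) (proj1_sig v).
Proof.
  intros [H1 H2]; split.
  - destruct H1 as [H1 | [s H1]]; rewrite H1; [left | right; exists (proj1_sig s)]; reflexivity.
  - destruct H2 as [H2 | [s H2]]; rewrite H2; [left | right; exists (proj1_sig s)]; reflexivity.
Qed.

Lemma sub_qi {S0 : Type} {m0 : S0 -> S0 -> S0} {j : S0 -> T} {o : T -> S0}
    (Hj : forall s, P (j s)) :
  qi_inverse_transversal m m0 j o ->
  qi_inverse_transversal mP m0 (fun s => exist P (j s) (Hj s)) (fun u => o (proj1_sig u)).
Proof.
  intros (Hjm & Hinj & Hinv & Huniq & Hqi); split; [|split; [|split; [|split]]].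
  - intros s t; apply val_inj; apply Hjm.
  - intros s t H; apply Hinj; exact (f_equal (@proj1_sig _ _) H).
  - intros [x Hx]; destruct (Hinv x) as [H1 H2]; split; apply val_inj; assumption.
  - intros [x Hx] s [H1 H2]; apply Huniq; split.
    + exact (f_equal (@proj1_sig _ _) H1).
    + exact (f_equal (@proj1_sig _ _) H2).
  - intros s t [x Hx]; destruct (Hqi s t x) as [u Hu]; exists u; apply val_inj; exact Hu.
Qed.
End Subsemigroup.

(* [x x^0 x^00]; the right factor uses [x^00 x^0 x], the left part for [converse_op m]. *)
Definition left_part {T S0 : Type} (m : T -> T -> T) (j : S0 -> T) (o : T -> S0) (x : T) : T :=
  m x (m (j (o x)) (j (o (j (o x))))).

Section Orthodox.
Context {S S0 : Type} {m : S -> S -> S} {m0 : S0 -> S0 -> S0} {j : S0 -> S} {o : S -> S0}.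
Hypotheses (HO : orthodox_semigroup m) (Hq : qi_inverse_transversal m m0 j o).

Let mA := proj1 HO.

Local Notation inv s := (o (j s)).
Local Notation lp := (left_part m j o).

Ltac norm := right_assoc (j_mul Hq) mA; reflexivity.

Lemma idem_sandwich a b e f : idempotent m (m e f) -> m a e = a -> m f b = b ->
  m a (m (m f e) b) = m a b.
Proof.
  intros Hef Ha Hb.
  transitivity (m (m a e) (m (m f e) (m f b))); [rewrite Ha, Hb; reflexivity|].
  transitivity (m a (m (m (m e f) (m e f)) b)); [repeat rewrite <- mA; reflexivity|].
  rewrite Hef; transitivity (m (m a e) (m f b)); [repeat rewrite <- mA; reflexivity|].
  rewrite Ha, Hb; reflexivity.
Qed.

Lemma o_mul x y : o (m x y) = m0 (o y) (o x).
Proof.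
  pose proof (proj2 (proj2 HO)) as Hid.
  assert (Ie := idem_o_x mA Hq x); assert (If := idem_x_o mA Hq y).
  assert (Hy : m (m y (j (o y))) y = y) by (rewrite <- mA; apply (x_o_x mA Hq)).
  assert (Hx : m (m (j (o x)) x) (j (o x)) = j (o x)) by (rewrite <- mA; apply (o_x_o mA Hq)).
  symmetry; apply (o_unique mA Hq).
  - transitivity (m x (m (m (m y (j (o y))) (m (j (o x)) x)) y)); [norm|].
    apply (idem_sandwich _ _ _ _ (Hid _ _ Ie If) (x_o_x mA Hq x) Hy).
  - transitivity (m (j (o y)) (m (m (m (j (o x)) x) (m y (j (o y)))) (j (o x)))); [norm|].
    rewrite (idem_sandwich _ _ _ _ (Hid _ _ If Ie) (o_x_o mA Hq y) Hx).
    symmetry; apply (j_mul Hq).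
Qed.

Ltac m0_norm := repeat rewrite <- (m0_assoc mA Hq).

Lemma idem_o e : idempotent m e -> idempotent m0 (o e).
Proof. intros He; unfold idempotent; rewrite <- o_mul, He; reflexivity. Qed.

Lemma o_x_y_o x y :
  m (j (o x)) (m x (m y (j (o y)))) = j (m0 (m0 (o x) (inv (o x))) (m0 (inv (o y)) (o y))).
Proof.
  destruct (quasi_ideal mA Hq (o x) (o y) (m x y)) as [w Hw].
  assert (Ew : m (j (o x)) (m x (m y (j (o y)))) = j w) by (rewrite <- Hw; norm).
  (* [w] is idempotent, hence its own inverse, which [o_mul] computes *)
  assert (Iw : idempotent m0 w).
  { apply (j_inj Hq); rewrite (j_mul Hq), <- Ew.
    transitivity (m (m (m (j (o x)) x) (m y (j (o y)))) (m (m (j (o x)) x) (m y (j (o y)))));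
      [norm|].
    rewrite (proj2 (proj2 HO) _ _ (idem_o_x mA Hq x) (idem_x_o mA Hq y)); norm. }
  rewrite Ew; f_equal.
  rewrite <- (inv_idem mA Hq w Iw), <- Ew, !o_mul.
  transitivity (m0 (m0 (inv (o y)) (o y)) (m0 (o x) (inv (o x)))); [m0_norm; reflexivity|].
  apply (idem_comm mA Hq); [apply (idem_inv_s mA Hq) | apply (idem_s_inv mA Hq)].
Qed.

Lemma x_y_o x y : m x (m y (j (o y))) = m (lp x) (j (m0 (inv (o y)) (o y))).
Proof.
  rewrite <- (x_o_x mA Hq x) at 1.
  transitivity (m x (m (j (o x)) (m x (m y (j (o y)))))); [norm|].
  rewrite o_x_y_o; unfold left_part; norm.
Qed.

Lemma left_part_idem_r x : m (lp x) (j (m0 (o x) (inv (o x)))) = lp x.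
Proof.
  unfold left_part.
  rewrite <- !(j_mul Hq), <- mA, <- (j_mul Hq), (idem_s_inv mA Hq (o x)); reflexivity.
Qed.

Lemma x_left_part x y : m x (lp y) = m (lp x) (j (inv (o y))).
Proof.
  transitivity (m (m x (m y (j (o y)))) (j (inv (o y)))); [unfold left_part; norm|].
  rewrite x_y_o, <- mA, <- (j_mul Hq), <- (m0_assoc mA Hq), (inv_s_inv mA Hq); reflexivity.
Qed.

Lemma left_part_mul x y : lp (m x y) = m (lp x) (j (inv (o y))).
Proof.
  unfold left_part at 1; rewrite o_mul, (inv_mul mA Hq).
  transitivity (m (m x (m y (j (o y)))) (j (m0 (o x) (m0 (inv (o x)) (inv (o y))))));
    [norm|].
  rewrite x_y_o, <- mA, <- (j_mul Hq), (m0_assoc mA Hq (o x)),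
    (idem_inv_absorb mA Hq _ _ (idem_s_inv mA Hq (o x))), (j_mul Hq), mA, left_part_idem_r.
  reflexivity.
Qed.

Lemma left_part_x_o_mul x y : lp x = x -> o y = o x -> lp (m x (m (j (o x)) y)) = x.
Proof.
  intros Hx Hy.
  rewrite left_part_mul, o_mul, Hy, (inv_mul mA Hq), (inv_inv mA Hq), left_part_idem_r.
  exact Hx.
Qed.

Lemma left_part_ideal x y : lp y = y -> lp (m x y) = m x y.
Proof. intros Hy; rewrite left_part_mul, <- x_left_part, Hy; reflexivity. Qed.

Lemma o_left_part x : o (lp x) = o x.
Proof.
  unfold left_part; rewrite !o_mul, (inv_inv mA Hq), <- (m0_assoc mA Hq).
  apply (s_inv_s mA Hq).
Qed.

Lemma left_part_idem x : lp (lp x) = lp x.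
Proof. unfold left_part at 1; rewrite o_left_part, <- (j_mul Hq); apply left_part_idem_r. Qed.

Lemma left_part_j s : lp (j s) = j s.
Proof. unfold left_part; rewrite (inv_inv mA Hq); apply (x_o_x mA Hq). Qed.

Lemma left_part_fixed_mul x y : lp x = x -> lp y = y -> m x y = m x (j (inv (o y))).
Proof. intros Hx Hy; rewrite <- Hy at 1; rewrite x_left_part, Hx; reflexivity. Qed.

Lemma left_part_idem_eq e f : lp e = e -> lp f = f -> idempotent m e -> idempotent m f ->
  m f e = e -> m e f = f -> e = f.
Proof.
  intros He Hf Ie If Hfe Hef.
  assert (Iof := idem_o f If).
  assert (Eo : o e = o f).
  { transitivity (m0 (o e) (o f)); [rewrite <- o_mul, Hfe; reflexivity|].
    rewrite (idem_comm mA Hq _ _ (idem_o e Ie) Iof), <- o_mul, Hef; reflexivity. }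
  assert (Hf' : m f (j (o f)) = f).
  { pose proof Hf as Hf'; unfold left_part in Hf'.
    rewrite (inv_idem mA Hq _ Iof), <- (j_mul Hq), Iof in Hf'; exact Hf'. }
  rewrite <- Hfe, (left_part_fixed_mul f e Hf He), Eo, (inv_idem mA Hq _ Iof); exact Hf'.
Qed.

Lemma left_part_Rrel_idem x e : lp e = e -> idempotent m e -> Rrel m x e -> e = m x (j (o x)).
Proof.
  intros He Ie HR.
  apply (left_part_idem_eq e (m x (j (o x))) He (left_part_ideal x _ (left_part_j (o x))) Ie
           (idem_x_o mA Hq x) (Rrel_x_o_mul mA Hq e x HR)).
  rewrite mA, (Rrel_idem_mul mA e x Ie HR); reflexivity.
Qed.

Lemma left_part_closed x y : lp x = x -> lp y = y -> lp (m x y) = m x y.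
Proof. intros _; apply left_part_ideal. Qed.

Definition lsub_mul := sub_mul m _ left_part_closed.
Definition lsub_j (s : S0) : {x | lp x = x} := exist _ (j s) (left_part_j s).
Definition lsub_o (u : {x | lp x = x}) : S0 := o (proj1_sig u).

Lemma lsub_qi : qi_inverse_transversal lsub_mul m0 lsub_j lsub_o.
Proof. exact (sub_qi left_part_closed left_part_j Hq). Qed.

Lemma lsub_left_inverse : left_inverse_semigroup lsub_mul.
Proof.
  split; [exact (sub_assoc _ mA) | split; [exact (qi_regular lsub_qi) |]].
  intros [x Hx]; exists (lsub_mul (exist (fun y => lp y = y) x Hx) (lsub_j (o x))); split.
  - split; [apply val_inj, (idem_x_o mA Hq) | split; right].
    + exists (exist (fun y => lp y = y) x Hx); apply val_inj; simpl; rewrite <- mA, (x_o_x mA Hq); reflexivity.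
    + exists (lsub_j (o x)); reflexivity.
  - intros [e He] [Ie HR]; apply val_inj; simpl; symmetry.
    exact (left_part_Rrel_idem x e He (sub_idempotent _ _ Ie) (sub_Rrel _ _ _ HR)).
Qed.
End Orthodox.

Section Reconstruction.
Context {S S0 : Type} {m : S -> S -> S} {m0 : S0 -> S0 -> S0} {j : S0 -> S} {o : S -> S0}.
Hypotheses (HO : orthodox_semigroup m) (Hq : qi_inverse_transversal m m0 j o).

Let mA := proj1 HO.
Let HO' := orthodox_converse HO.
Let Hq' := qi_converse mA Hq.

Local Notation inv s := (o (j s)).
Local Notation lp := (left_part m j o).
Local Notation rp := (left_part (converse_op m) j o).

Definition rsub_mul := converse_op (lsub_mul HO' Hq').
Definition rsub_j := lsub_j HO' Hq'.
Definition rsub_o := lsub_o (m := converse_op m) (j := j) (o := o).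

Lemma rsub_right_inverse : right_inverse_semigroup rsub_mul.
Proof. exact (right_converse_of_left (lsub_left_inverse HO' Hq')). Qed.

Lemma rsub_qi : qi_inverse_transversal rsub_mul m0 rsub_j rsub_o.
Proof. exact (qi_converse (proj1 (lsub_left_inverse HO' Hq')) (lsub_qi HO' Hq')). Qed.

Lemma right_part_mul x y : rp (m x y) = m (j (inv (o x))) (rp y).
Proof. exact (left_part_mul HO' Hq' y x). Qed.

Lemma right_part_o_mul x y : rp x = x -> o y = o x -> rp (m (m y (j (o x))) x) = x.
Proof. exact (left_part_x_o_mul HO' Hq' x y). Qed.

Lemma left_part_o_right_part x : m (lp x) (m (j (o x)) (rp x)) = x.
Proof.
  unfold left_part, converse_op.
  transitivity (m x (m (j (m0 (m0 (o x) (m0 (inv (o x)) (o x))) (m0 (inv (o x)) (o x)))) x));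
    [right_assoc (j_mul Hq) mA; reflexivity|].
  rewrite !(s_inv_s mA Hq); apply (x_o_x mA Hq).
Qed.

Definition decompose (x : S) : sig (spined_carrier (lsub_o (m := m)) rsub_o) :=
  exist _ (exist (fun y => lp y = y) (lp x) (left_part_idem HO Hq x),
           exist (fun y => rp y = y) (rp x) (left_part_idem HO' Hq' x))
        (eq_trans (o_left_part HO Hq x) (eq_sym (o_left_part HO' Hq' x))).

Lemma decompose_iso : is_isomorphism m
  (sub_mul _ _ (spined_closed (lsub_left_inverse HO Hq) rsub_right_inverse (lsub_qi HO Hq) rsub_qi))
  decompose.
Proof.
  split; [|split].
  - intros x y; apply val_inj; simpl; unfold spined_mul; simpl; f_equal; apply val_inj;
      unfold rsub_o, rsub_j, lsub_o, lsub_j; simpl.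
    + rewrite (o_left_part HO Hq); apply (left_part_mul HO Hq).
    + rewrite (o_left_part HO' Hq'); apply right_part_mul.
  - intros x y H.
    assert (Hl : lp x = lp y) by exact (f_equal (fun u => proj1_sig (fst (proj1_sig u))) H).
    assert (Hr : rp x = rp y) by exact (f_equal (fun u => proj1_sig (snd (proj1_sig u))) H).
    assert (Ho : o x = o y).
    { rewrite <- (o_left_part HO Hq x), Hl; apply (o_left_part HO Hq). }
    rewrite <- (left_part_o_right_part x), <- (left_part_o_right_part y), Hl, Hr, Ho.
    reflexivity.
  - intros [[[l Hl] [r Hr]] Hc]; unfold spined_carrier, lsub_o, rsub_o in Hc; simpl in Hc.
    exists (m l (m (j (o l)) r)); apply val_inj; simpl; f_equal; apply val_inj; simpl.
    + exact (left_part_x_o_mul HO Hq l r Hl (eq_sym Hc)).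
    + rewrite Hc, mA; exact (right_part_o_mul r l Hr Hc).
Qed.
End Reconstruction.

Theorem corollary4p5 :
  (forall (L R S0 : Type) (mL : L -> L -> L) (mR : R -> R -> R)
          (m0 : S0 -> S0 -> S0)
          (iL : S0 -> L) (oL : L -> S0) (iR : S0 -> R) (oR : R -> S0),
      left_inverse_semigroup mL ->
      right_inverse_semigroup mR ->
      qi_inverse_transversal mL m0 iL oL ->
      qi_inverse_transversal mR m0 iR oR ->
      exists Hcl : (forall u v,
                      spined_carrier oL oR u -> spined_carrier oL oR v ->
                      spined_carrier oL oR (spined_mul mL mR iL oL iR oR u v)),
        orthodox_semigroup (sub_mul _ _ Hcl) /\
        exists (j : S0 -> sig (spined_carrier oL oR))
               (o : sig (spined_carrier oL oR) -> S0),
          qi_inverse_transversal (sub_mul _ _ Hcl) m0 j o)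
  /\
  (forall (S S0 : Type) (m : S -> S -> S) (m0 : S0 -> S0 -> S0)
          (j : S0 -> S) (o : S -> S0),
      orthodox_semigroup m ->
      qi_inverse_transversal m m0 j o ->
      exists (L R : Type) (mL : L -> L -> L) (mR : R -> R -> R)
             (iL : S0 -> L) (oL : L -> S0) (iR : S0 -> R) (oR : R -> S0),
        left_inverse_semigroup mL /\
        right_inverse_semigroup mR /\
        qi_inverse_transversal mL m0 iL oL /\
        qi_inverse_transversal mR m0 iR oR /\
        exists (Hcl : forall u v,
                  spined_carrier oL oR u -> spined_carrier oL oR v ->
                  spined_carrier oL oR (spined_mul mL mR iL oL iR oR u v))
               (phi : S -> sig (spined_carrier oL oR)),
          is_isomorphism m (sub_mul _ _ Hcl) phi).
Proof.
  split.
  - intros L R S0 mL mR m0 iL oL iR oR HL HR HqL HqR.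
    exists (spined_closed HL HR HqL HqR); split.
    + exact (spined_orthodox HL HR HqL HqR).
    + exists (spined_j HL HR HqL HqR), spined_o; exact (spined_qi HL HR HqL HqR).
  - intros S S0 m m0 j o HO Hq.
    exists _, _, (lsub_mul HO Hq), (rsub_mul HO Hq), (lsub_j HO Hq), lsub_o,
      (rsub_j HO Hq), (rsub_o (m := m)).
    split; [exact (lsub_left_inverse HO Hq) |].
    split; [exact (rsub_right_inverse HO Hq) |].
    split; [exact (lsub_qi HO Hq) |].
    split; [exact (rsub_qi HO Hq) |].
    exists (spined_closed (lsub_left_inverse HO Hq) (rsub_right_inverse HO Hq)
              (lsub_qi HO Hq) (rsub_qi HO Hq)), (decompose HO Hq).
    exact (decompose_iso HO Hq).
Qed.
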